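(* Let $G=(V,E)$ be connected with $n\ge3$ vertices. Then $\mathrm{bc}(u)=0$ for every $u\in V_1$, and for every $u\in V_{\ge2}$ and every $s\in V\setminus\{u\}$: (a) if $s\in V_{\ge2}$, then $\delta_s(u)=\tilde\delta_s(u)+\zeta_s(u)+\mathrm{deg}_1(u)$; (b) if $s\in V_1$ and $s$ is not adjacent to $u$, with unique neighbor $y$, then $\delta_s(u)=\tilde\delta_y(u)+\zeta_y(u)+\mathrm{deg}_1(u)$; (c) if $s\in V_1$ and $s$ is adjacent to $u$, then $\delta_s(u)=n-2$. Consequently $\mathrm{bc}(u)=\frac{1}{(n-1)(n-2)}\sum_{s\in V\setminus\{u\}}\delta_s(u)$ is determined by these values.
   Context: Graphs are finite, simple, undirected, unweighted. In a graph, $\sigma_{st}$ is the number of shortest $s$–$t$ paths and $\sigma_{st}(v)$ the number through $v\notin\{s,t\}$; $\delta_s(v)=\sum_{t\in V,\ t\ne s,v}\sigma_{st}(v)/\sigma_{st}$ (computed in $G$), and $\mathrm{bc}(v)=\frac{1}{(n-1)(n-2)}\sum_{s\ne v}\delta_s(v)$. $V_1$ is the set of degree-1 vertices of $G$, $V_{\ge2}=V\setminus V_1$, $\tilde G$ the subgraph induced by $V_{\ge2}$, with counts $\tilde\sigma$. For $t\in V$, $\mathrm{deg}_1(t)$ is the number of neighbors of $t$ of degree 1 in $G$. For $s,u\in V_{\ge2}$: $\tilde\delta_s(u)=\sum_{t\in V_{\ge2},t\neq s,u}\tilde\sigma_{st}(u)/\tilde\sigma_{st}$ and $\zeta_s(u)=\sum_{t\in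 V_{\ge2},\,t\ne s,u}\mathrm{deg}_1(t)\,\tilde\sigma_{st}(u)/\tilde\sigma_{st}$; set $\tilde\delta_u(u)=\zeta_u(u)=0$. *)

From mathcomp Require Import all_boot all_order all_algebra.
Set Implicit Arguments. Unset Strict Implicit. Unset Printing Implicit Defensive.
Import Order.TTheory GRing.Theory Num.Theory.
Local Open Scope ring_scope.

(* A walk from s of length k is a k-tuple p
   (the vertices after s) with path e s p; it ends at last s p. *)

Section Graph.
Variables (T : finType) (e : rel T).

Definition nwalks (s t : T) (k : nat) : nat :=
  #|[set p : k.-tuple T | path e s p && (last s p == t)]|.

(* distance: least k < #|T| with a walk of length k (#|T| if unreachable) *)
Definition gdist (s t : T) : nat :=
  find (fun k => (0 < nwalks s t k)%N) (iota 0 #|T|).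

Definition sigma (s t : T) : nat := nwalks s t (gdist s t).

(* sigma_{st}(v): number of shortest s-t paths containing v
   (used only for v <> s, t, where this means v is an inner vertex) *)
Definition sigmav (s t v : T) : nat :=
  #|[set p : (gdist s t).-tuple T |
        [&& path e s p, last s p == t & v \in p]]|.

Definition deg (x : T) : nat := #|[set y | e x y]|.
Definition V1 : {set T} := [set x | deg x == 1%N].
Definition V2 : {set T} := ~: V1.
Definition deg1 (t : T) : nat := #|[set y | e t y & y \in V1]|.

Definition delta (s v : T) : rat :=
  \sum_(t | (t != s) && (t != v)) ((sigmav s t v)%:R / (sigma s t)%:R).

Definition bc (v : T) : rat :=
  (((#|T|.-1) * (#|T|.-2))%N%:R)^-1 * \sum_(s | s != v) delta s v.

End Graph.

(* edge relation of the subgraph induced by V_{>=2} (vertices outside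
   V_{>=2} become isolated and are never used) *)
Definition tilde_rel (T : finType) (e : rel T) : rel T :=
  fun x y => [&& e x y, x \in V2 e & y \in V2 e].

Definition tdelta (T : finType) (e : rel T) (s u : T) : rat :=
  if s == u then 0 else
  \sum_(t in V2 e | (t != s) && (t != u))
     ((sigmav (tilde_rel e) s t u)%:R / (sigma (tilde_rel e) s t)%:R).

Definition zeta (T : finType) (e : rel T) (s u : T) : rat :=
  if s == u then 0 else
  \sum_(t in V2 e | (t != s) && (t != u))
     ((deg1 e t)%:R * (sigmav (tilde_rel e) s t u)%:R
        / (sigma (tilde_rel e) s t)%:R).

From mathcomp Require Import all_boot all_order all_algebra.
Set Implicit Arguments. Unset Strict Implicit. Unset Printing Implicit Defensive.
Import Order.TTheory GRing.Theory Num.Theory.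
Local Open Scope ring_scope.

(* A leaf lies on no shortest path except as an endpoint, and the neighbour of
   a leaf is never a leaf (connectivity and n >= 3).  So shortest paths between
   vertices of V_{>=2} live in the induced subgraph, with the same distances
   and counts.  A shortest path to a leaf t is a shortest path to its neighbour
   z followed by the edge zt, so its pair dependency equals that of z; summing
   over leaves produces the deg1-weighted term zeta, and the terms t = u give
   deg1(u).  A shortest path from a leaf s starts with the edge sy, which
   reduces (b) to (a) at y, and (c) to "u lies on every such path". *)

Section Walks.
Variables (T : finType) (r : rel T).
Implicit Types (s t u v : T) (k : nat) (Q : pred (seq T)).

Definition nwalks_pred s t k Q : nat :=
  #|[set p : k.-tuple T | [&& path r s p, last s p == t & Q p]]|.

Definition pair_dep s t u : rat := (sigmav r s t u)%:R / (sigma r s t)%:R.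

Lemma nwalksE s t k : nwalks r s t k = nwalks_pred s t k predT.
Proof. by apply: eq_card => p; rewrite !inE andbT. Qed.

Lemma sigmaE s t : sigma r s t = nwalks_pred s t (gdist r s t) predT.
Proof. exact: nwalksE. Qed.

Lemma sigmavE s t v :
  sigmav r s t v = nwalks_pred s t (gdist r s t) (fun p => v \in p).
Proof. by []. Qed.

Lemma nwalks_pred_gt0P s t k Q :
  reflect (exists p, [/\ size p = k, path r s p, last s p = t & Q p])
          (0 < nwalks_pred s t k Q)%N.
Proof.
apply: (iffP card_gt0P) => [[p]|[p [sp pp lp qp]]].
  rewrite inE => /and3P[pp /eqP lp qp].
  by exists p; rewrite size_tuple.
have sp' : size p == k by rewrite sp.
by exists (Tuple sp'); rewrite inE /= pp lp eqxx qp.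
Qed.

Lemma eq_nwalks_pred s t k Q Q' :
  (forall p, size p = k -> path r s p -> last s p = t -> Q p = Q' p) ->
  nwalks_pred s t k Q = nwalks_pred s t k Q'.
Proof.
move=> eqQ; apply: eq_card => p; rewrite !inE.
have [/andP[pp /eqP lp]|] := boolP (path r s p && (last s p == t)).
  by rewrite pp lp eqxx eqQ ?size_tuple.
by rewrite negb_and => /orP[] /negbTE ->; rewrite ?andbF.
Qed.

Lemma nwalks_pred0 s t Q : (s != t) || ~~ Q [::] -> nwalks_pred s t 0 Q = 0%N.
Proof.
move=> hQ; apply/eqP; rewrite eqn0Ngt.
apply/nwalks_pred_gt0P => -[p [/size0nil -> _ /= st qp]].
by rewrite st eqxx qp in hQ.
Qed.

Lemma nwalks_pred_forced_first s t k Q y :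
  (forall z, r s z -> z = y) -> r s y ->
  nwalks_pred s t k.+1 Q = nwalks_pred y t k (fun p => Q (y :: p)).
Proof.
move=> only_y rsy; rewrite /nwalks_pred.
have cons_inj : injective (fun p : k.-tuple T => cons_tuple y p).
  by move=> p q /(congr1 val) [] /val_inj.
rewrite -(card_imset _ cons_inj); congr #|pred_of_set _|.
apply/setP => p; apply/idP/imsetP.
  case/tupleP: p => x p; rewrite inE /= => /and3P[/andP[rsx pp] lp qp].
  rewrite (only_y _ rsx) in pp lp qp *.
  by exists p; [rewrite inE pp lp qp | apply: val_inj].
by case=> q; rewrite inE => /and3P[pq lq qq] ->; rewrite inE /= rsy pq lq qq.
Qed.

Lemma nwalks_pred_forced_last s t k Q z :
  (forall x, r x t -> x = z) -> r z t ->
  nwalks_pred s t k.+1 Q = nwalks_pred s z k (fun p => Q (rcons p t)).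
Proof.
move=> only_z rzt; rewrite /nwalks_pred.
have rcons_inj : injective (fun p : k.-tuple T => rcons_tuple p t).
  by move=> p q /(congr1 val) /= /eqP; rewrite eqseq_rcons eqxx andbT => /eqP/val_inj.
rewrite -(card_imset _ rcons_inj); congr #|pred_of_set _|.
apply/setP => p; apply/idP/imsetP.
  case/tupleP: p => x p; rewrite inE => /and3P[pp lt qp].
  have {pp} : path r s (rcons (belast x p) (last x p)) by rewrite -lastI.
  have {lt} : last x p = t by exact: (eqP lt).
  move=> lt; rewrite rcons_path lt => /andP[pp rlt].
  exists (belast_tuple x p); last by apply: val_inj; rewrite /= -lt -lastI.
  by rewrite inE /= pp (only_z _ rlt) eqxx -lt -lastI qp.
case=> q; rewrite inE => /and3P[pq /eqP lq qq] ->.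
by rewrite inE /= rcons_path last_rcons lq rzt pq eqxx qq.
Qed.

Lemma walk_nwalks_gt0 s p : path r s p -> (0 < nwalks r s (last s p) (size p))%N.
Proof. by move=> pp; rewrite nwalksE; apply/nwalks_pred_gt0P; exists p. Qed.

Lemma gdist_le_card s t : (gdist r s t <= #|T|)%N.
Proof. by rewrite /gdist -{2}(size_iota 0 #|T|) find_size. Qed.

Lemma nwalks_lt_gdist s t k : (k < gdist r s t)%N -> nwalks r s t k = 0%N.
Proof.
move=> lt_k; have lt_kT := leq_trans lt_k (gdist_le_card s t).
have := before_find 0%N lt_k; rewrite nth_iota // add0n.
by move/negbT; rewrite -eqn0Ngt => /eqP.
Qed.

Lemma nwalks_gdist_gt0 s t :
  (gdist r s t < #|T|)%N -> (0 < nwalks r s t (gdist r s t))%N.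
Proof.
move=> lt_dT; have := @nth_find _ 0%N (fun k => 0 < nwalks r s t k)%N (iota 0 #|T|).
by rewrite has_find size_iota => /(_ lt_dT); rewrite nth_iota // add0n.
Qed.

Lemma gdist_leq s t k : (0 < nwalks r s t k)%N -> (gdist r s t <= k)%N.
Proof.
move=> walk_k; rewrite leqNgt; apply: contraTN walk_k.
by move/nwalks_lt_gdist ->.
Qed.

Lemma gdist_eq s t d : (gdist r s t < #|T|)%N -> (0 < nwalks r s t d)%N ->
  (forall k, (k < d)%N -> nwalks r s t k = 0%N) -> gdist r s t = d.
Proof.
move=> lt_dT walk_d no_walk; have := nwalks_gdist_gt0 lt_dT.
case: (ltngtP (gdist r s t) d) => // [/no_walk -> //|/nwalks_lt_gdist].
by move: walk_d => /[swap] ->.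
Qed.

Lemma gdist_connect s t : connect r s t -> (gdist r s t < #|T|)%N.
Proof.
case/connectP => p pp ->; case: (shortenP pp) => q pq uq _.
have lt_qT : (size q < #|T|)%N.
  by have := max_card (mem (s :: q)); rewrite (card_uniqP uq).
exact: leq_ltn_trans (gdist_leq (walk_nwalks_gt0 pq)) lt_qT.
Qed.

Lemma gdist_shift s t s' t' :
  (gdist r s t < #|T|)%N -> (gdist r s' t' < #|T|)%N -> s != t ->
  (forall k, nwalks r s t k.+1 = nwalks r s' t' k) ->
  gdist r s t = (gdist r s' t').+1.
Proof.
move=> lt_dT lt_dT' st shift; apply: gdist_eq => //.
  by rewrite shift nwalks_gdist_gt0.
case=> [_|k lt_k]; first by rewrite nwalksE nwalks_pred0 ?st.
by rewrite shift nwalks_lt_gdist.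
Qed.

Lemma gdist_refl s : (gdist r s s < #|T|)%N -> gdist r s s = 0%N.
Proof.
by move=> lt_dT; apply: gdist_eq => //; apply: (walk_nwalks_gt0 (p := [::])).
Qed.

Lemma sigma_gt0 s t : (gdist r s t < #|T|)%N -> (0 < sigma r s t)%N.
Proof. exact: nwalks_gdist_gt0. Qed.

Lemma pair_dep_on_all s t u : (gdist r s t < #|T|)%N ->
  (forall p, size p = gdist r s t -> path r s p -> last s p = t -> u \in p) ->
  pair_dep s t u = 1.
Proof.
move=> lt_dT all_u; rewrite /pair_dep sigmavE sigmaE (eq_nwalks_pred (Q' := predT)).
  by rewrite -sigmaE divff // pnatr_eq0 -lt0n sigma_gt0.
by move=> p *; rewrite all_u.
Qed.

End Walks.

Section Leaves.
Variables (T : finType) (e : rel T).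
Hypotheses (esym : symmetric e) (eirr : irreflexive e)
  (conn : forall x y : T, connect e x y) (n3 : (3 <= #|T|)%N).
Implicit Types (s t u x y z : T).

Lemma V1P x : x \in V1 e -> exists y, e x y /\ forall z, e x z -> z = y.
Proof.
rewrite inE /deg => /cards1P [y nbr_x]; exists y.
split=> [|z exz]; first by have := set11 y; rewrite -nbr_x inE.
by apply/set1P; rewrite -nbr_x inE.
Qed.

Lemma V1_nbr_uniq x y z : x \in V1 e -> e x y -> e x z -> y = z.
Proof. by case/V1P => w [_ only_w] /only_w -> /only_w ->. Qed.

Lemma gdist_lt_card s t : (gdist e s t < #|T|)%N.
Proof. exact: gdist_connect. Qed.

Lemma V1_nbr_V2 t z : t \in V1 e -> e t z -> z \in V2 e.
Proof.
move=> tV1 etz; rewrite inE; apply/negP => zV1.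
have closed_tz : closed e (mem [set t; z]).
  apply: (intro_closed (sym_connect_sym esym)) => x y exy.
  rewrite !inE => /orP[] /eqP xE; rewrite xE in exy.
    by rewrite (V1_nbr_uniq tV1 exy etz) eqxx orbT.
  by rewrite (V1_nbr_uniq zV1 exy (etrans (esym z t) etz)) eqxx.
have : (#|T| <= #|[set t; z]|)%N.
  rewrite -cardsT; apply/subset_leq_card/subsetP => x _.
  by rewrite -(closed_connect closed_tz (conn t x)) !inE eqxx.
by rewrite cards2 => /(leq_trans n3); case: (t != z).
Qed.

(* A leaf inside a walk is entered and left through its only neighbour;
   cutting out that detour gives a walk shorter by two. *)
Lemma shortest_walk_V1 u s t p : u \in V1 e ->
  size p = gdist e s t -> path e s p -> last s p = t -> u \in p -> u = t.
Proof.
move=> uV1 sp pp lp /splitPr up; case: up => p1 p2 in sp pp lp *.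
case: p2 => [|b p3] in sp pp lp *; first by rewrite last_cat in lp.
move: pp; rewrite cat_path /= => /and4P[pp1 eau eub pp3].
have ab : last s p1 = b by apply: (V1_nbr_uniq uV1); rewrite // esym.
have pq : path e s (p1 ++ p3) by rewrite cat_path pp1 ab pp3.
have shorter : (size (p1 ++ p3) < gdist e s t)%N.
  by rewrite -sp !size_cat /= !addnS ltnS leqnSn.
move: lp; rewrite last_cat /= => lp.
by have := walk_nwalks_gt0 pq; rewrite last_cat ab lp nwalks_lt_gdist.
Qed.

Lemma pair_dep_via_V1 u s t : u \in V1 e -> u != t -> pair_dep e s t u = 0.
Proof.
move=> uV1 ut; rewrite /pair_dep sigmavE.
suff -> : nwalks_pred e s t (gdist e s t) (fun p => u \in p) = 0%N by rewrite mul0r.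
apply/eqP; rewrite eqn0Ngt; apply/nwalks_pred_gt0P => -[p [sp pp lp up]].
by move: ut; rewrite (shortest_walk_V1 uV1 sp pp lp up) eqxx.
Qed.

Section LeafNeighbour.
Variables (t z : T).
Hypotheses (tV1 : t \in V1 e) (etz : e t z).

Let into_t x : e x t -> x = z.
Proof. by move=> ext; apply: (V1_nbr_uniq tV1); rewrite // esym. Qed.

Let ezt : e z t. Proof. by rewrite esym. Qed.

Let out_of_t y : e t y -> y = z.
Proof. by move/(V1_nbr_uniq tV1)/(_ etz). Qed.

Lemma gdist_to_V1 s : s != t -> gdist e s t = (gdist e s z).+1.
Proof.
move=> st; apply: gdist_shift; rewrite ?gdist_lt_card // => k.
by rewrite !nwalksE (nwalks_pred_forced_last _ _ _ into_t ezt).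
Qed.

Lemma pair_dep_to_V1 s u : s != t -> u != t -> pair_dep e s t u = pair_dep e s z u.
Proof.
move=> st ut; rewrite /pair_dep !sigmavE !sigmaE (gdist_to_V1 st).
rewrite !(nwalks_pred_forced_last _ _ _ into_t ezt); congr (_%:R / _%:R).
by apply: eq_nwalks_pred => p *; rewrite mem_rcons in_cons (negbTE ut).
Qed.

Lemma gdist_from_V1 u : t != u -> gdist e t u = (gdist e z u).+1.
Proof.
move=> tu; apply: gdist_shift; rewrite ?gdist_lt_card // => k.
by rewrite !nwalksE (nwalks_pred_forced_first _ _ _ out_of_t etz).
Qed.

Lemma pair_dep_from_V1 s u : t != s -> u != z -> pair_dep e t s u = pair_dep e z s u.
Proof.
move=> ts uz; rewrite /pair_dep !sigmavE !sigmaE (gdist_from_V1 ts).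
rewrite !(nwalks_pred_forced_first _ _ _ out_of_t etz).
by congr (_%:R / _%:R); apply: eq_nwalks_pred => p *; rewrite in_cons (negbTE uz).
Qed.

Lemma pair_dep_from_V1_nbr s : t != s -> pair_dep e t s z = 1.
Proof.
move=> ts; apply: pair_dep_on_all; rewrite ?gdist_lt_card // => -[|x p] /= sp.
  by rewrite (gdist_from_V1 ts) in sp.
by case/andP=> /out_of_t -> *; rewrite mem_head.
Qed.

End LeafNeighbour.

Lemma pair_dep_refl s u : pair_dep e s s u = 0.
Proof.
rewrite /pair_dep sigmavE gdist_refl ?gdist_lt_card // nwalks_pred0 ?orbT //.
by rewrite mul0r.
Qed.

Lemma pair_dep_last s u : s != u -> pair_dep e s u u = 1.
Proof.
move=> su; apply: pair_dep_on_all; rewrite ?gdist_lt_card // => p _ _ lp.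
by move: (mem_last s p); rewrite lp in_cons eq_sym (negbTE su).
Qed.

Lemma nwalks_pred_tilde s t Q : s \in V2 e -> t \in V2 e ->
  nwalks_pred (tilde_rel e) s t (gdist e s t) Q = nwalks_pred e s t (gdist e s t) Q.
Proof.
move=> sV2 tV2; apply: eq_card => p; rewrite !inE; apply/idP/idP.
  by case/and3P=> pp -> ->; rewrite (sub_path _ pp) // => x y /and3P[].
case/and3P=> pp /eqP lp ->; rewrite lp eqxx !andbT.
have e_tilde : {in [pred x | x \in V2 e] &, subrel e (tilde_rel e)}.
  by move=> x y xV2 yV2 exy; rewrite /tilde_rel exy xV2 yV2.
apply: (sub_in_path e_tilde _ pp); rewrite /= sV2; apply/allP => v vp.
have [-> //|vt] := eqVneq v t; rewrite /= inE; apply: contra vt => vV1.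
by rewrite (shortest_walk_V1 vV1 (size_tuple p) pp lp vp).
Qed.

Lemma gdist_tilde s t : s \in V2 e -> t \in V2 e ->
  gdist (tilde_rel e) s t = gdist e s t.
Proof.
move=> sV2 tV2; have walk_d : (0 < nwalks (tilde_rel e) s t (gdist e s t))%N.
  by rewrite nwalksE nwalks_pred_tilde // -nwalksE nwalks_gdist_gt0 ?gdist_lt_card.
have lt_dT := gdist_lt_card s t.
apply: (gdist_eq _ walk_d) => [|k lt_k].
  exact: leq_ltn_trans (gdist_leq walk_d) lt_dT.
apply/eqP; rewrite -leqn0 -(nwalks_lt_gdist lt_k) !nwalksE.
apply/subset_leq_card/subsetP => p; rewrite !inE => /and3P[pp -> _].
by rewrite (sub_path _ pp) // => x y /and3P[].
Qed.

Lemma pair_dep_tilde s t u : s \in V2 e -> t \in V2 e ->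
  pair_dep (tilde_rel e) s t u = pair_dep e s t u.
Proof.
by move=> sV2 tV2; rewrite /pair_dep !sigmavE !sigmaE gdist_tilde // !nwalks_pred_tilde.
Qed.

Lemma deg1_V1 z : z \in V1 e -> deg1 e z = 0%N.
Proof.
move=> zV1; apply: eq_card0 => t; rewrite in_set.
apply/negP => /andP[ezt tV1].
by move: (V1_nbr_V2 tV1 (etrans (esym t z) ezt)); rewrite inE zV1.
Qed.

Lemma sum_V1 (G : T -> rat) :
  (forall t z, t \in V1 e -> e t z -> G t = G z) ->
  \sum_(t in V1 e) G t = \sum_z (deg1 e z)%:R * G z.
Proof.
move=> G_nbr; transitivity (\sum_(t in V1 e) \sum_(z | e t z) G z).
  apply: eq_bigr => t tV1; have [y [ety only_y]] := V1P tV1.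
  rewrite (big_pred1 y) ?(G_nbr _ _ tV1 ety) // => z /=.
  by apply/idP/eqP => [/only_y|->].
rewrite (exchange_big_dep predT) //=; apply: eq_bigr => z _.
rewrite (eq_bigl (mem [set t | e z t & t \in V1 e])) => [|t].
  by rewrite sumr_const mulr_natl.
by rewrite !inE esym andbC.
Qed.

Let V2_notin_V1 x : x \in V2 e -> x \in V1 e = false.
Proof. by rewrite inE => /negbTE. Qed.

Lemma deltaE s u : delta e s u = \sum_(t | (t != s) && (t != u)) pair_dep e s t u.
Proof. by []. Qed.

Lemma tdeltaE s u : s \in V2 e -> s != u ->
  tdelta e s u = \sum_(t in V2 e | (t != s) && (t != u)) pair_dep e s t u.
Proof.
move=> sV2 su; rewrite /tdelta (negbTE su).
by apply: eq_bigr => t /andP[tV2 _]; rewrite -pair_dep_tilde.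
Qed.

Lemma zetaE s u : s \in V2 e -> s != u ->
  zeta e s u = \sum_(z | (z != s) && (z != u)) (deg1 e z)%:R * pair_dep e s z u.
Proof.
move=> sV2 su; rewrite /zeta (negbTE su) [RHS](bigID (mem (V2 e))) /=.
rewrite [X in _ = _ + X]big1 ?addr0 => [|z /andP[_ zV1]]; last first.
  by rewrite deg1_V1 ?mul0r // -[z \in V1 e]negbK -in_setC.
apply: eq_big => [z|z /andP[zV2 _]]; first by rewrite andbC.
by rewrite -pair_dep_tilde // mulrA.
Qed.

Lemma delta_V2 s u : s \in V2 e -> u \in V2 e -> s != u ->
  delta e s u = tdelta e s u + zeta e s u + (deg1 e u)%:R.
Proof.
move=> sV2 uV2 su; rewrite deltaE tdeltaE // zetaE //.
rewrite (bigID (mem (V2 e))) /= -addrA; congr (_ + _).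
  by apply: eq_bigl => t; rewrite andbC.
have -> : \sum_(t | (t != s) && (t != u) && (t \notin V2 e)) pair_dep e s t u
          = \sum_(t in V1 e) pair_dep e s t u.
  apply: eq_bigl => t; rewrite in_setC negbK andbC.
  have [tV1|] //= := boolP (t \in V1 e).
  by apply/andP; split; apply: contraTneq tV1 => ->; rewrite V2_notin_V1.
rewrite sum_V1 => [|t z tV1 etz]; last first.
  apply: pair_dep_to_V1 => //; apply: contraTneq tV1 => <-; rewrite V2_notin_V1 //.
rewrite (bigD1 u) //= pair_dep_last // mulr1 (bigD1 s) //= pair_dep_refl mulr0 add0r.
by rewrite addrC (eq_bigl (fun z => (z != s) && (z != u))) // => z; rewrite andbC.
Qed.

Lemma delta_V1 s y u : s \in V1 e -> e s y -> u != s -> u != y ->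
  delta e s u = delta e y u.
Proof.
move=> sV1 esy us uy; have ys : y != s by apply: contraTneq esy => ->; rewrite eirr.
rewrite !deltaE; transitivity (\sum_(t | (t != s) && (t != u)) pair_dep e y t u).
  by apply: eq_bigr => t /andP[ts _]; apply: pair_dep_from_V1; rewrite // eq_sym.
have split_at x : x != u -> \sum_(t | t != u) pair_dep e y t u =
    pair_dep e y x u + \sum_(t | (t != x) && (t != u)) pair_dep e y t u.
  move=> xu; rewrite (bigD1 x) //=; congr (_ + _).
  by apply: eq_bigl => t; rewrite andbC.
have su : s != u by rewrite eq_sym.
have yu : y != u by rewrite eq_sym.
have := split_at s su; rewrite (split_at y yu) (pair_dep_to_V1 sV1 esy) //.
by rewrite pair_dep_refl !add0r => <-.
Qed.

Lemma delta_V1_nbr s u : s \in V1 e -> e s u -> delta e s u = (#|T| - 2)%:R.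
Proof.
move=> sV1 esu; have su : s != u by apply: contraTneq esu => ->; rewrite eirr.
rewrite deltaE (eq_bigr (fun _ => 1)) => [|t /andP[ts _]]; last first.
  by apply: pair_dep_from_V1_nbr; rewrite // eq_sym.
rewrite (eq_bigl (mem (~: [set s; u]))) => [|t]; last by rewrite !inE negb_or.
by rewrite sumr_const cardsCs setCK cards2 su subn2.
Qed.

Lemma bc_V1 u : u \in V1 e -> bc e u = 0.
Proof.
move=> uV1; rewrite /bc big1 ?mulr0 // => s su.
by rewrite deltaE big1 // => t /andP[_ tu]; rewrite pair_dep_via_V1 // eq_sym.
Qed.

End Leaves.

Theorem mainTheorem5 (T : finType) (e : rel T)
  (esym : symmetric e) (eirr : irreflexive e)
  (conn : forall x y : T, connect e x y)
  (n3 : (3 <= #|T|)%N) :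
  (forall u : T, u \in V1 e -> bc e u = 0) /\
  (forall u s : T, u \in V2 e -> s != u ->
     [/\ (s \in V2 e ->
            delta e s u = tdelta e s u + zeta e s u + (deg1 e u)%:R),
         (s \in V1 e -> ~~ e s u -> forall y : T, e s y ->
            delta e s u = tdelta e y u + zeta e y u + (deg1 e u)%:R)
       & (s \in V1 e -> e s u -> delta e s u = (#|T| - 2)%:R)]).
Proof.
split=> [u|u s uV2 su]; first exact: bc_V1.
split=> [sV2|sV1 nesu y esy|sV1 esu]; first exact: (delta_V2 esym conn n3).
- have yV2 := V1_nbr_V2 esym conn n3 sV1 esy.
  have yu : y != u by apply: contraNneq nesu => <-.
  rewrite (delta_V1 esym eirr conn sV1 esy) 1?eq_sym //.
  exact: (delta_V2 esym conn n3).
- exact: (delta_V1_nbr eirr conn sV1 esu).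
Qed.
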